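(* Let $p,q\in(0,1)$. The following are equivalent: (a) $\mathbb{P}^{(1,1)}_{p,q}(\tau=+\infty)>0$; (b) there exist integers $N\ge1$ and $T\ge1$ such that $\mathbb{E}^{(N,N)}_{p,q}\big[\lfloor Z_T/N\rfloor\big]>1$.
   Context: Cooperative model: for $p,q\in(0,1)$, a Markov chain $(X_n,Y_n)_{n\ge0}$ on $\mathbb{N}^2$ whose transition law from state $(x,y)$ is $\mu_{(x,y)}=\mathrm{Bin}(2,q)^{*(x+y)}\otimes\mathrm{Bin}(2,p)^{*\min(x,y)}$, i.e. given the past, $X_{n+1}\sim\mathrm{Bin}(2(X_n+Y_n),q)$ and $Y_{n+1}\sim\mathrm{Bin}(2\min(X_n,Y_n),p)$ are independent. $\mathbb{P}^{(x,y)}_{p,q}$ (with expectation $\mathbb{E}^{(x,y)}_{p,q}$) denotes the law of this process started from $(x,y)$. $Z_n=\min(X_n,Y_n)$ and $\tau=\inf\{n\ge0: Z_n=0\}$. *)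

From HB Require Import structures.
From mathcomp Require Import all_boot all_order all_algebra.
From mathcomp Require Import all_classical all_reals all_analysis.
Set Implicit Arguments. Unset Strict Implicit. Unset Printing Implicit Defensive.
Import Order.TTheory GRing.Theory Num.Theory numFieldNormedType.Exports.
Local Open Scope ring_scope.

(* Cooperative model: Markov chain (X_n, Y_n) on nat * nat with
   X_{n+1} ~ Bin(2(X_n+Y_n), q), Y_{n+1} ~ Bin(2 min(X_n,Y_n), p), independent.
   Note Bin(2,q)^{*(x+y)} = Bin(2(x+y), q). *)

Section Coop.
Variable R : realType.

(* pmf of Bin(n, r) at k (zero for k > n since 'C(n,k) = 0). *)
Definition binpmf (r : R) (n k : nat) : R :=
  ('C(n, k))%:R * r ^+ k * (1 - r) ^+ (n - k).

Definition coop_trans (p q : R) (s s' : nat * nat) : R :=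
  binpmf q (2 * (s.1 + s.2)) s'.1 * binpmf p (2 * minn s.1 s.2) s'.2.

(* (P f)(s) = E^s[f(X_1,Y_1)]; the transition law from s is supported on
   [0, 2(x+y)] x [0, 2 min(x,y)], so this finite sum is the full expectation. *)
Definition coop_step (p q : R) (f : nat * nat -> R) (s : nat * nat) : R :=
  \sum_(i < (2 * (s.1 + s.2)).+1) \sum_(j < (2 * minn s.1 s.2).+1)
     coop_trans p q s (i : nat, j : nat) * f (i : nat, j : nat).

Definition coop_expect (p q : R) (T : nat) (f : nat * nat -> R) (s : nat * nat) : R :=
  iter T (coop_step p q) f s.

Definition Zof (s : nat * nat) : nat := minn s.1 s.2.

(* P^s(tau > n) = P^s(Z_0 > 0, ..., Z_n > 0) *)
Fixpoint coop_surv (p q : R) (n : nat) (s : nat * nat) : R :=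
  match n with
  | 0 => (0 < Zof s)%N%:R
  | n'.+1 => (0 < Zof s)%N%:R * coop_step p q (coop_surv p q n') s
  end.

(* P^s(tau = +oo) = lim_n P^s(tau > n)  (continuity from above) *)
Definition coop_tau_inf (p q : R) (s : nat * nat) : R :=
  limn (fun n => coop_surv p q n s).

End Coop.

From HB Require Import structures.
From mathcomp Require Import all_boot all_order all_algebra.
From mathcomp Require Import all_classical all_reals all_analysis.
From mathcomp Require Import ring lra zify.
Import Order.TTheory GRing.Theory Num.Theory numFieldNormedType.Exports.
Set Implicit Arguments.
Unset Strict Implicit.
Unset Printing Implicit Defensive.

Local Open Scope ring_scope.

(* For [0 <= rho <= 1] the map [s |-> rho^(floor (Z s / N))] is submultiplicative
   on N^2 with values in [0, 1], and the transition operator preserves this class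
   because [min] is superadditive.  Hence [h s := E^s[rho^(floor (Z_T / N))]]
   satisfies [h s <= h (N, N)^(floor (Z s / N))].
   (b) -> (a): a mean [> 1] yields [rho < 1] with [h (N, N) <= rho], so
   [rho^(floor (Z / N))] decreases in expectation along multiples of [T]; as it
   equals 1 after extinction, survival from a state with [Z >= N] has
   probability at least [1 - rho], and such a state is reached from (1, 1).
   (a) -> (b): a state with small positive [Z] dies in one step with probability
   bounded below, so if survival has probability [sigma > 0] then [Z_T] is
   eventually 0 or large, giving [E^(1,1)[rho^Z_T] < rho^3] for
   [rho = 1 - sigma / 8]; submultiplicativity makes [E^(N,N)[rho^Z_T]]
   exponentially smaller than [rho^(3 N)], which forces the mean of
   [floor (Z_T / N)] from (N, N) above 1. *)

Lemma onemX_le_quadratic (R : realFieldType) (e : R) k : 0 <= e <= 1 ->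
  (1 - e) ^+ k <= 1 - k%:R * e + k%:R ^+ 2 * e ^+ 2.
Proof.
move=> /andP[e0 e1]; elim: k => [|k IH]; first by rewrite mul0r expr0n /= mul0r subr0 addr0.
rewrite exprS; apply: le_trans (ler_wpM2l _ IH) _; first by rewrite subr_ge0.
have k0 : 0 <= k%:R :> R by [].
rewrite -natr1; nra.
Qed.

Lemma exists_expr_lt (R : realType) (x e : R) : 0 <= x < 1 -> 0 < e ->
  exists2 n, (0 < n)%N & x ^+ n < e.
Proof.
move=> /andP[x0 x1] e0; have nx : `|x| < 1 by rewrite ger0_norm.
have [N _ ltN] := cvgr_lt 0 (cvg_expr nx) e e0.
by exists N.+1 => //; apply: ltN => /=.
Qed.

Lemma natr_divn_ge (R : realFieldType) (rho : R) m N k : 0 < rho <= 1 -> (0 < N)%N ->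
  m%:R * (1 - rho ^+ k / rho ^+ (m * N)) <= (k %/ N)%:R.
Proof.
move=> /andP[rho0 rho1] N0; have rmN : 0 < rho ^+ (m * N) by rewrite exprn_gt0.
case: (leqP (m * N) k) => [mN_k|k_mN].
  have le_m : (m <= k %/ N)%N by rewrite leq_divRL.
  apply: le_trans (_ : m%:R <= _); last by rewrite ler_nat.
  by rewrite ler_piMr // lerBlDr lerDl divr_ge0 ?exprn_ge0 ?ltW.
apply: le_trans (_ : _ <= 0) _ => //; rewrite mulr_ge0_le0 // subr_le0 ler_pdivlMr // mul1r.
by apply: ler_wiXn2l; rewrite ?(ltW rho0) ?(ltnW k_mN).
Qed.

Section BinomialExpectation.
Variable R : realType.
Implicit Types (r c : R) (h k : nat -> R).

Definition bin_expect r n h : R := \sum_(i < n.+1) binpmf r n i * h i.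

Lemma binpmf_ge0 r n i : 0 <= r <= 1 -> 0 <= binpmf r n i.
Proof.
by case/andP=> r0 r1; rewrite /binpmf !mulr_ge0 ?exprn_ge0 ?subr_ge0.
Qed.

Lemma binpmf_gt0 r n i : 0 < r < 1 -> (i <= n)%N -> 0 < binpmf r n i.
Proof.
by case/andP=> r0 r1 le_in; rewrite /binpmf !mulr_gt0 ?exprn_gt0 ?subr_gt0 ?ltr0n ?bin_gt0.
Qed.

Lemma eq_bin_expect r n h k : h =1 k -> bin_expect r n h = bin_expect r n k.
Proof. by move=> hk; apply: eq_bigr => i _; rewrite hk. Qed.

Lemma ler_bin_expect r n h k : 0 <= r <= 1 ->
  (forall i, h i <= k i) -> bin_expect r n h <= bin_expect r n k.
Proof. by move=> r01 hk; apply: ler_sum => i _; rewrite ler_wpM2l ?binpmf_ge0. Qed.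

Lemma bin_expectD r n h k :
  bin_expect r n (fun i => h i + k i) = bin_expect r n h + bin_expect r n k.
Proof. by rewrite /bin_expect -big_split; apply: eq_bigr => i _; rewrite mulrDr. Qed.

Lemma bin_expectZ r n c h :
  bin_expect r n (fun i => c * h i) = c * bin_expect r n h.
Proof. by rewrite /bin_expect big_distrr; apply: eq_bigr => i _; rewrite mulrCA. Qed.

Lemma bin_expectB r n h k :
  bin_expect r n (fun i => h i - k i) = bin_expect r n h - bin_expect r n k.
Proof. by rewrite /bin_expect -sumrB; apply: eq_bigr => i _; rewrite mulrBr. Qed.

Lemma bin_expect0n r h : bin_expect r 0 h = h 0%N.
Proof. by rewrite /bin_expect big_ord1 /binpmf bin0 subnn !expr0 !mul1r. Qed.

Lemma bin_expectSn r n h :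
  bin_expect r n.+1 h = r * bin_expect r n (fun i => h i.+1) + (1 - r) * bin_expect r n h.
Proof.
rewrite {1}/bin_expect big_ord_recl /=.
under eq_bigr => i _ do rewrite /binpmf /bump /= add1n binS natrD !mulrDl.
rewrite big_split /=.
have -> : \sum_(i < n.+1) 'C(n, i)%:R * r ^+ i.+1 * (1 - r) ^+ (n.+1 - i.+1) * h i.+1
    = r * bin_expect r n (fun i => h i.+1).
  rewrite big_distrr; apply: eq_bigr => i _ /=; rewrite /binpmf subSS exprS; ring.
have <- : binpmf r n.+1 0 * h 0%N +
    \sum_(i < n.+1) 'C(n, i.+1)%:R * r ^+ i.+1 * (1 - r) ^+ (n.+1 - i.+1) * h i.+1
    = (1 - r) * bin_expect r n h.
  rewrite /bin_expect [in LHS]big_ord_recr [in RHS]big_ord_recl /= bin_small // !mul0r addr0.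
  rewrite mulrDr big_distrr /=; congr (_ + _).
    by rewrite /binpmf !bin0 !subn0 exprS; ring.
  apply: eq_bigr => i _; rewrite /binpmf /bump /= add1n subSS.
  have -> : (n - i = (n - i.+1).+1)%N by have := ltn_ord i; lia.
  by rewrite !exprS; ring.
ring.
Qed.

Lemma bin_expect_cst r n c : bin_expect r n (fun _ => c) = c.
Proof. by elim: n => [|n IH]; rewrite ?bin_expect0n // bin_expectSn IH; ring. Qed.

Lemma bin_expect_ge0 r n h : 0 <= r <= 1 -> (forall i, 0 <= h i) -> 0 <= bin_expect r n h.
Proof. by move=> r01 h0; rewrite -(bin_expect_cst r n 0); apply: ler_bin_expect. Qed.

Lemma bin_expect01 r n h : 0 <= r <= 1 ->
  (forall i, 0 <= h i <= 1) -> 0 <= bin_expect r n h <= 1.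
Proof.
move=> r01 h01; apply/andP; split.
  by apply: bin_expect_ge0 => // i; case/andP: (h01 i).
rewrite -[X in _ <= X](bin_expect_cst r n 1).
by apply: ler_bin_expect => // i; case/andP: (h01 i).
Qed.

Lemma bin_expect_addn r n m h :
  bin_expect r (n + m) h = bin_expect r n (fun i => bin_expect r m (fun j => h (i + j)%N)).
Proof.
elim: n h => [|n IH] h; first by rewrite bin_expect0n.
by rewrite addSn !bin_expectSn !IH.
Qed.

Lemma exchange_bin_expect r r' n m (k : nat -> nat -> R) :
  bin_expect r n (fun i => bin_expect r' m (k i)) =
  bin_expect r' m (fun j => bin_expect r n (k^~ j)).
Proof.
rewrite /bin_expect; under eq_bigr do rewrite big_distrr.
rewrite exchange_big; apply: eq_bigr => j _; rewrite big_distrr.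
by apply: eq_bigr => i _ /=; rewrite mulrCA.
Qed.

Lemma bin_expect_ge_term r n h i : 0 <= r <= 1 -> (forall j, 0 <= h j) ->
  (i <= n)%N -> binpmf r n i * h i <= bin_expect r n h.
Proof.
move=> r01 h0 le_in; rewrite /bin_expect (bigD1 (Ordinal (le_in : i < n.+1)%N)) //=.
by rewrite lerDl sumr_ge0 // => j _; rewrite mulr_ge0 ?binpmf_ge0.
Qed.

Lemma bin_expect_neq0 r n : bin_expect r n (fun j => (j != 0)%N%:R) = 1 - (1 - r) ^+ n.
Proof.
rewrite (eq_bin_expect _ _ (k := fun j => 1 - (j == 0)%N%:R)); last first.
  by case=> [|j]; rewrite /= ?subrr ?subr0.
rewrite bin_expectB bin_expect_cst /bin_expect big_ord_recl big1 => [|i _]; last first.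
  by rewrite /bump /= mulr0.
by rewrite /binpmf bin0 subn0 !mul1r mulr1 addr0.
Qed.

End BinomialExpectation.

Section Submultiplicative.
Variable R : realType.
Implicit Types (r : R) (g : nat * nat -> R) (s t : nat * nat).

Definition submul01 g :=
  (forall s, 0 <= g s <= 1) /\ (forall s t, g (s.1 + t.1, s.2 + t.2)%N <= g s * g t).

Lemma submul01_nonincr g s d1 d2 : submul01 g -> g (s.1 + d1, s.2 + d2)%N <= g s.
Proof.
move=> [g01 gM]; apply: le_trans (gM s (d1, d2)) _.
by have /andP[? ?] := g01 s; have /andP[? ?] := g01 (d1, d2); rewrite ler_piMr.
Qed.

Lemma submul01_mulnX g k a b : submul01 g -> g (k * a, k * b)%N <= g (a, b) ^+ k.
Proof.
move=> [g01 gM]; elim: k => [|k IH]; first by rewrite !mul0n expr0; case/andP: (g01 (0, 0)%N).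
rewrite !mulSn exprS; apply: le_trans (gM (a, b) (k * a, k * b)%N) _.
by rewrite ler_wpM2l //; case/andP: (g01 (a, b)).
Qed.

Lemma submul01_le_expZ g N s : submul01 g -> g s <= g (N, N) ^+ (Zof s %/ N).
Proof.
move=> gs; set k := (Zof s %/ N)%N.
have [le_k1 le_k2] : (k * N <= s.1)%N /\ (k * N <= s.2)%N.
  by split; apply: leq_trans (leq_divM _ _) _; rewrite ?geq_minl ?geq_minr.
have -> : s = ((k * N, k * N).1 + (s.1 - k * N), (k * N, k * N).2 + (s.2 - k * N))%N.
  by clearbody k; case: s le_k1 le_k2 => a b /= ? ?; rewrite !subnKC.
exact: le_trans (submul01_nonincr _ _ _ gs) (submul01_mulnX _ _ _ gs).
Qed.

Definition expZ r N s : R := r ^+ (Zof s %/ N).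

(* Submultiplicativity comes from the superadditivity of [min]. *)
Lemma submul01_expZ r N : 0 <= r <= 1 -> (0 < N)%N -> submul01 (expZ r N).
Proof.
move=> /andP[r0 r1] N_gt0; split => [s|s t]; first by rewrite exprn_ge0 ?exprn_ile1.
rewrite -exprD ler_wiXn2l //; apply: leq_trans (_ : (Zof s + Zof t) %/ N <= _)%N.
  by rewrite divnD // leq_addr.
by apply: leq_div2r; rewrite /Zof /=; lia.
Qed.

Definition pair_bin_expect p q g a b : R :=
  bin_expect q a (fun i => bin_expect p b (fun j => g (i, j))).

Lemma submul01_pair_bin_expect p q g : 0 <= p <= 1 -> 0 <= q <= 1 ->
  submul01 g -> submul01 (fun ab => pair_bin_expect p q g ab.1 ab.2).
Proof.
move=> p01 q01 [g01 gM]; split=> [ab|[a b] [a' b']].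
  by apply: bin_expect01 => // i; apply: bin_expect01.
rewrite /pair_bin_expect /= bin_expect_addn.
have splitp i : bin_expect q a' (fun i' => bin_expect p (b + b') (fun j => g ((i + i')%N, j))) =
    bin_expect p b (fun j =>
      bin_expect q a' (fun i' => bin_expect p b' (fun j' => g ((i + i')%N, (j + j')%N)))).
  by rewrite [RHS]exchange_bin_expect; apply: eq_bin_expect => i'; rewrite bin_expect_addn.
under eq_bin_expect => i do rewrite splitp.
rewrite [X in _ <= X]mulrC -bin_expectZ.
apply: ler_bin_expect => // i; rewrite -bin_expectZ; apply: ler_bin_expect => // j.
rewrite [X in _ <= X]mulrC -bin_expectZ; apply: ler_bin_expect => // i'.
rewrite -bin_expectZ; apply: ler_bin_expect => // j'.
exact: (gM (i, j) (i', j')).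
Qed.

End Submultiplicative.

Section CoopExpectation.
Variables (R : realType) (p q : R).
Hypotheses (p01 : 0 <= p <= 1) (q01 : 0 <= q <= 1).
Implicit Types (c : R) (f g : nat * nat -> R) (s : nat * nat).

Lemma coop_stepE f s : coop_step p q f s =
  bin_expect q (2 * (s.1 + s.2)) (fun i => bin_expect p (2 * Zof s) (fun j => f (i, j))).
Proof.
rewrite /coop_step /bin_expect; apply: eq_bigr => i _; rewrite big_distrr.
by apply: eq_bigr => j _ /=; rewrite mulrA.
Qed.

Lemma eq_coop_step f g : f =1 g -> coop_step p q f =1 coop_step p q g.
Proof. by move=> fg s; rewrite !coop_stepE; do 2!apply: eq_bin_expect => ?. Qed.

Lemma ler_coop_step f g : (forall s, f s <= g s) ->
  forall s, coop_step p q f s <= coop_step p q g s.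
Proof. by move=> fg s; rewrite !coop_stepE; do 2!apply: ler_bin_expect => // ?. Qed.

Lemma coop_stepD f g s :
  coop_step p q (fun s => f s + g s) s = coop_step p q f s + coop_step p q g s.
Proof.
rewrite !coop_stepE -bin_expectD; apply: eq_bin_expect => i.
exact: bin_expectD.
Qed.

Lemma coop_stepB f g s :
  coop_step p q (fun s => f s - g s) s = coop_step p q f s - coop_step p q g s.
Proof.
rewrite !coop_stepE -bin_expectB; apply: eq_bin_expect => i.
exact: bin_expectB.
Qed.

Lemma coop_stepZ c f s : coop_step p q (fun s => c * f s) s = c * coop_step p q f s.
Proof.
rewrite !coop_stepE -bin_expectZ; apply: eq_bin_expect => i.
exact: bin_expectZ.
Qed.

Lemma coop_step_cst c s : coop_step p q (fun => c) s = c.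
Proof.
by rewrite coop_stepE (eq_bin_expect _ _ (k := fun => c)) ?bin_expect_cst // => i.
Qed.

Lemma coop_expectSn T f : coop_expect p q T.+1 f = coop_expect p q T (coop_step p q f).
Proof. exact: iterSr. Qed.

Lemma coop_expect_timeD m n f :
  coop_expect p q (m + n) f = coop_expect p q m (coop_expect p q n f).
Proof. exact: iterD. Qed.

Lemma eq_coop_expect T f g : f =1 g -> coop_expect p q T f =1 coop_expect p q T g.
Proof.
by elim: T => [|T IH] // fg s; rewrite /coop_expect !iterS; apply: eq_coop_step => s'; apply: IH.
Qed.

Lemma ler_coop_expect T f g : (forall s, f s <= g s) ->
  forall s, coop_expect p q T f s <= coop_expect p q T g s.
Proof.
by elim: T => [|T IH] // fg s; rewrite /coop_expect !iterS; apply: ler_coop_step => s'; apply: IH.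
Qed.

Lemma coop_expectD T f g s : coop_expect p q T (fun s => f s + g s) s =
  coop_expect p q T f s + coop_expect p q T g s.
Proof.
elim: T s => [|T IH] s //; rewrite /coop_expect !iterS -coop_stepD.
exact: eq_coop_step.
Qed.

Lemma coop_expectB T f g s : coop_expect p q T (fun s => f s - g s) s =
  coop_expect p q T f s - coop_expect p q T g s.
Proof.
elim: T s => [|T IH] s //; rewrite /coop_expect !iterS -coop_stepB.
exact: eq_coop_step.
Qed.

Lemma coop_expectZ T c f s :
  coop_expect p q T (fun s => c * f s) s = c * coop_expect p q T f s.
Proof.
elim: T s => [|T IH] s //; rewrite /coop_expect !iterS -coop_stepZ.
exact: eq_coop_step.
Qed.

Lemma coop_expect_cst T c s : coop_expect p q T (fun => c) s = c.
Proof.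
elim: T s => [|T IH] s //; rewrite /coop_expect iterS -[RHS](coop_step_cst c s).
exact: eq_coop_step.
Qed.

End CoopExpectation.

Section CoopChain.
Variables (R : realType) (p q : R).
Hypotheses (p01 : 0 <= p <= 1) (q01 : 0 <= q <= 1).
Implicit Types (f g : nat * nat -> R) (s t : nat * nat).

Lemma coop_step_pair g s :
  coop_step p q g s = pair_bin_expect p q g (2 * (s.1 + s.2)) (2 * Zof s).
Proof. exact: coop_stepE. Qed.

Lemma submul01_coop_step g : submul01 g -> submul01 (coop_step p q g).
Proof.
move=> /(submul01_pair_bin_expect p01 q01) Gs; have [G01 GM] := Gs.
split=> [s|s t]; rewrite !coop_step_pair; first exact: (G01 (_, _)).
set d := (2 * Zof (s.1 + t.1, s.2 + t.2) - (2 * Zof s + 2 * Zof t))%N.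
have -> : (2 * Zof (s.1 + t.1, s.2 + t.2) = 2 * Zof s + 2 * Zof t + d)%N.
  by rewrite /d /Zof /=; lia.
have -> : (2 * (s.1 + t.1 + (s.2 + t.2)) = 2 * (s.1 + s.2) + 2 * (t.1 + t.2))%N by lia.
have := submul01_nonincr (2 * (s.1 + s.2) + 2 * (t.1 + t.2), 2 * Zof s + 2 * Zof t)%N 0 d Gs.
by rewrite /= addn0 => /le_trans; apply; apply: (GM (_, _) (_, _)).
Qed.

Lemma submul01_coop_expect T g : submul01 g -> submul01 (coop_expect p q T g).
Proof.
by move=> gs; elim: T => [|T IH] //; rewrite /coop_expect iterS; apply: submul01_coop_step.
Qed.

Definition alive s : R := (0 < Zof s)%N%:R.

Lemma alive_Y0 i : alive (i, 0%N) = 0.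
Proof. by rewrite /alive /Zof minn0. Qed.

Lemma alive01 s : 0 <= alive s <= 1.
Proof. by rewrite /alive; case: (0 < Zof s)%N; rewrite ?lexx ?ler01. Qed.

Lemma coop_step_absorb f s : Zof s = 0%N -> (forall i, f (i, 0%N) = 0) ->
  coop_step p q f s = 0.
Proof.
move=> Z0 f0; rewrite coop_stepE Z0 muln0.
by under eq_bin_expect => i do rewrite bin_expect0n f0; apply: bin_expect_cst.
Qed.

Lemma coop_expect_alive_absorb T s : Zof s = 0%N -> coop_expect p q T alive s = 0.
Proof.
elim: T s => [|T IH] s Z0; first by rewrite /coop_expect /= /alive Z0.
by rewrite /coop_expect iterS; apply: coop_step_absorb => // i; apply: IH; rewrite /Zof minn0.
Qed.

Lemma coop_survE n s : coop_surv p q n s = coop_expect p q n alive s.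
Proof.
elim: n s => [|n IH] s //=; rewrite (eq_coop_step p q IH).
case: (posnP (Zof s)) => [Z0|_]; last by rewrite mul1r.
rewrite mul0r coop_step_absorb // => i.
by apply: coop_expect_alive_absorb; rewrite /Zof minn0.
Qed.

Lemma coop_step_alive_le s : coop_step p q alive s <= alive s.
Proof.
case: (posnP (Zof s)) => [Z0|Zpos].
  by rewrite (coop_step_absorb Z0 alive_Y0) /alive Z0.
rewrite /alive Zpos -[X in _ <= X](coop_step_cst p q 1 s).
by apply: ler_coop_step => // s'; case/andP: (alive01 s').
Qed.

Lemma coop_surv01 n s : 0 <= coop_surv p q n s <= 1.
Proof.
rewrite coop_survE; apply/andP; split.
  rewrite -(coop_expect_cst p q n 0 s).
  by apply: ler_coop_expect => // s'; case/andP: (alive01 s').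
rewrite -[X in _ <= X](coop_expect_cst p q n 1 s).
by apply: ler_coop_expect => // s'; case/andP: (alive01 s').
Qed.

Lemma coop_surv_nonincr s :
  {homo (fun n => coop_surv p q n s) : m n / (m <= n)%N >-> n <= m}.
Proof.
move=> m n /subnK <-; rewrite /= !coop_survE; elim: (n - m)%N => [|k IH] //.
rewrite addSn coop_expectSn; apply: le_trans IH.
exact: ler_coop_expect coop_step_alive_le _.
Qed.

Lemma coop_surv_cvg s : cvgn (fun n => coop_surv p q n s).
Proof.
apply: nonincreasing_is_cvgn; first exact: coop_surv_nonincr.
by exists 0 => _ [n _ <-]; case/andP: (coop_surv01 n s).
Qed.

Lemma coop_tau_inf_le_surv n s : coop_tau_inf p q s <= coop_surv p q n s.
Proof. exact: nonincreasing_cvgn_ge (coop_surv_nonincr s) (@coop_surv_cvg s) n. Qed.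

Lemma coop_tau_inf_ge c s : (forall n, c <= coop_surv p q n s) -> c <= coop_tau_inf p q s.
Proof. by move=> le_c; apply: limr_ge; [exact: coop_surv_cvg | apply: nearW]. Qed.

(* It suffices that none of the [2 Z] trials for [Y] succeeds. *)
Lemma coop_step_alive_ub s : coop_step p q alive s <= 1 - (1 - p) ^+ (2 * Zof s).
Proof.
rewrite coop_stepE -[X in _ <= X](bin_expect_cst q (2 * (s.1 + s.2))).
apply: ler_bin_expect => // i; rewrite -bin_expect_neq0; apply: ler_bin_expect => // j.
by rewrite /alive /Zof /=; case: j => [|j]; rewrite ?minn0 // ler_nat leq_b1.
Qed.

Definition alive_below n s : R := ((0 < Zof s) && (Zof s < n))%N%:R.

Lemma alive_below_le_drop n s :
  (1 - p) ^+ (2 * n) * alive_below n s <= alive s - coop_step p q alive s.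
Proof.
have [p0 p1] := andP p01.
case: (posnP (Zof s)) => [Z0|Zpos].
  by rewrite (coop_step_absorb Z0 alive_Y0) /alive_below /alive Z0 mulr0 subrr.
have alive1 : alive s = 1 by rewrite /alive Zpos.
have le_step := coop_step_alive_le s; rewrite alive1 in le_step.
rewrite alive1 /alive_below Zpos /=.
case: ltnP => [Zn|_]; last by rewrite mulr0 subr_ge0.
rewrite mulr1 lerBrDr -lerBrDl; apply: le_trans (coop_step_alive_ub s) _.
by rewrite lerB // ler_wiXn2l ?subr_ge0 ?lerBlDr ?lerDl // leq_mul2l ltnW.
Qed.

Lemma coop_expect_alive_below n T s :
  (1 - p) ^+ (2 * n) * coop_expect p q T (alive_below n) s <=
  coop_surv p q T s - coop_surv p q T.+1 s.
Proof.
rewrite -coop_expectZ !coop_survE coop_expectSn -coop_expectB.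
exact: ler_coop_expect (alive_below_le_drop n) _.
Qed.

End CoopChain.

Arguments alive {R} s.
Arguments alive_below {R} n s.

Section Persistence.
Variables (R : realType) (p q : R).
Hypotheses (p01 : 0 <= p <= 1) (q01 : 0 <= q <= 1).
Implicit Types (rho : R) (s : nat * nat).

Lemma coop_surv_addn m n s :
  coop_surv p q (m + n) s = coop_expect p q m (coop_surv p q n) s.
Proof.
rewrite !coop_survE coop_expect_timeD; apply: eq_coop_expect => // s'.
by rewrite coop_survE.
Qed.

(* Take [rho = 1 - e] with [e = (E f - 1) / E f^2] and expand [(1 - e)^f] to
   second order. *)
Lemma coop_expect_contraction T (f : nat * nat -> nat) s :
  1 < coop_expect p q T (fun s => (f s)%:R) s ->
  exists2 rho, 0 <= rho < 1 & coop_expect p q T (fun s => rho ^+ f s) s <= rho.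
Proof.
set m := coop_expect p q T _ s => m_gt1.
set M := coop_expect p q T (fun s => (f s)%:R ^+ 2) s.
have le_mM : m <= M by apply: ler_coop_expect => // s'; rewrite -natrX ler_nat; nia.
have M0 : 0 < M by rewrite (lt_le_trans _ le_mM) // (lt_trans ltr01).
set e := (m - 1) / M.
have e0 : 0 < e by rewrite divr_gt0 // subr_gt0.
have e1 : e <= 1 by rewrite ler_pdivrMr // mul1r (le_trans _ le_mM) // gerBl.
exists (1 - e); first by rewrite subr_ge0 e1 ltrBlDr ltrDl.
have eM : e * M = m - 1 by rewrite mulrAC -mulrA divff ?mulr1 // gt_eqF.
apply: le_trans (_ : coop_expect p q T
    (fun s => 1 - e * (f s)%:R + e ^+ 2 * (f s)%:R ^+ 2) s <= _).
  apply: ler_coop_expect => // s'; apply: le_trans (onemX_le_quadratic _ _) _.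
    by rewrite (ltW e0) e1.
  by rewrite [e * _]mulrC [e ^+ 2 * _]mulrC.
rewrite coop_expectD coop_expectB coop_expect_cst !coop_expectZ -/m -/M expr2 -mulrA eM.
by rewrite mulrBr mulr1 addrA subrK.
Qed.

Lemma coop_expect_mulT_expZ_le rho N T : 0 <= rho <= 1 -> (0 < N)%N ->
  coop_expect p q T (expZ rho N) (N, N) <= rho ->
  forall j s, coop_expect p q (j * T) (expZ rho N) s <= expZ rho N s.
Proof.
move=> rho01 N0 le_rho.
have hs := submul01_coop_expect p01 q01 T (submul01_expZ rho01 N0).
have period s : coop_expect p q T (expZ rho N) s <= expZ rho N s.
  apply: le_trans (submul01_le_expZ N s hs) _; apply: lerXn2r => //.
    by rewrite nnegrE; case/andP: (hs.1 (N, N)).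
  by rewrite nnegrE; case/andP: rho01.
elim=> [|j IH] s //; rewrite mulSn coop_expect_timeD; apply: le_trans (period s).
exact: ler_coop_expect.
Qed.

Lemma alive_ge_onem_expZ rho N s : 0 <= rho -> 1 - expZ rho N s <= alive s.
Proof.
move=> rho0; rewrite /alive /expZ; case: (posnP (Zof s)) => [->|_].
  by rewrite div0n expr0 subrr.
by rewrite lerBlDr lerDl exprn_ge0.
Qed.

Lemma expZ1_le_alive_below rho n s : 0 <= rho <= 1 ->
  expZ rho 1 s <= 1 + rho ^+ n - alive s + alive_below n s.
Proof.
move=> /andP[rho0 rho1]; have rn0 : 0 <= rho ^+ n by rewrite exprn_ge0.
rewrite /expZ /alive /alive_below divn1; case: (posnP (Zof s)) => [->|_] /=.
  by rewrite expr0 subr0 addr0 lerDl.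
rewrite [1 + _]addrC addrK; case: ltnP => Zn /=; rewrite ?addr0.
  by rewrite (le_trans (exprn_ile1 _ rho0 rho1)) ?lerDr.
exact: ler_wiXn2l.
Qed.

Lemma coop_surv_ge_onem_expZ rho N T : 0 <= rho <= 1 -> (0 < N)%N -> (0 < T)%N ->
  coop_expect p q T (expZ rho N) (N, N) <= rho ->
  forall n s, 1 - expZ rho N s <= coop_surv p q n s.
Proof.
move=> rho01 N0 T0 le_rho n s.
apply: le_trans (coop_surv_nonincr p01 q01 s (leq_pmulr n T0)); rewrite coop_survE.
apply: le_trans (_ : coop_expect p q (n * T) (fun s => 1 - expZ rho N s) s <= _).
  by rewrite coop_expectB coop_expect_cst lerD2l lerN2 coop_expect_mulT_expZ_le.
by apply: ler_coop_expect => // s'; apply: alive_ge_onem_expZ; case/andP: rho01.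
Qed.

(* [floor (Z / N) >= 3 (1 - rho^Z / rho^(3 N))], while by submultiplicativity
   [E^(N,N) rho^Z <= (E^(1,1) rho^Z)^N], which is small compared to [rho^(3 N)]. *)
Lemma coop_mean_gt1_of_expZ1_lt rho T : 0 < rho < 1 ->
  coop_expect p q T (expZ rho 1) (1%N, 1%N) < rho ^+ 3 ->
  exists2 N, (0 < N)%N & 1 < coop_expect p q T (fun s => (Zof s %/ N)%N%:R) (N, N).
Proof.
move=> /andP[rho0 rho1] lt3; have rho01 : 0 <= rho <= 1 by rewrite !ltW.
have hs := submul01_coop_expect p01 q01 T (submul01_expZ rho01 (ltnSn 0)).
set v := coop_expect p q T _ _ in lt3.
have r3 : 0 < rho ^+ 3 by rewrite exprn_gt0.
have c01 : 0 <= v / rho ^+ 3 < 1.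
  have [v0 _] := andP (hs.1 (1%N, 1%N)).
  by rewrite divr_ge0 ?(ltW r3) //= ltr_pdivrMr // mul1r.
have [N N0 lt_c] : exists2 N, (0 < N)%N & (v / rho ^+ 3) ^+ N < 2 / 3.
  by apply: exists_expr_lt; rewrite ?divr_gt0.
exists N => //; have r3N : 0 < rho ^+ (3 * N) by rewrite exprn_gt0.
have le_vN : coop_expect p q T (expZ rho 1) (N, N) <= v ^+ N.
  by have := submul01_mulnX N 1 1 hs; rewrite !muln1.
apply: lt_le_trans (_ : 3 * (1 - v ^+ N / rho ^+ (3 * N)) <= _).
  by move: lt_c; rewrite expr_div_n -exprM; lra.
apply: le_trans (_ : coop_expect p q T
    (fun s => 3 * (1 - expZ rho 1 s / rho ^+ (3 * N))) (N, N) <= _).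
  rewrite coop_expectZ coop_expectB coop_expect_cst.
  under eq_coop_expect => s do rewrite mulrC.
  by rewrite coop_expectZ ler_pM2l // lerD2l lerN2 mulrC ler_pM2r ?invr_gt0.
by apply: ler_coop_expect => // s; rewrite /expZ divn1 natr_divn_ge ?rho0 ?ltW.
Qed.

End Persistence.

Section Criterion.
Variables (R : realType) (p q : R).
Hypotheses (hp : 0 < p < 1) (hq : 0 < q < 1).

Let p01 : 0 <= p <= 1. Proof. by case/andP: hp => ? ?; rewrite !ltW. Qed.
Let q01 : 0 <= q <= 1. Proof. by case/andP: hq => ? ?; rewrite !ltW. Qed.

Lemma coop_step_diag_ge (f : nat * nat -> R) b : (forall s, 0 <= f s) ->
  exists2 c, 0 < c & c * f (2 * b, 2 * b)%N <= coop_step p q f (b, b).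
Proof.
move=> f0; exists (binpmf q (2 * (b + b)) (2 * b) * binpmf p (2 * b) (2 * b)).
  by rewrite mulr_gt0 ?binpmf_gt0 //; lia.
have le_b : (2 * b <= 2 * (b + b))%N by lia.
rewrite coop_stepE /Zof minnn -mulrA; apply: le_trans (bin_expect_ge_term q01 _ le_b).
  by rewrite ler_wpM2l ?binpmf_ge0 //; apply: (bin_expect_ge_term p01).
by move=> i; apply: bin_expect_ge0 => // j; apply: f0.
Qed.

Lemma coop_expect_diag_ge k (f : nat * nat -> R) a : (forall s, 0 <= f s) ->
  exists2 c, 0 < c & c * f (2 ^ k * a, 2 ^ k * a)%N <= coop_expect p q k f (a, a).
Proof.
elim: k f => [|k IH] f f0; first by exists 1; rewrite // mul1r !mul1n.
have [t t0 le_t] := coop_step_diag_ge (2 ^ k * a) f0.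
have stepf0 s : 0 <= coop_step p q f s.
  by rewrite -(coop_step_cst p q 0 s); apply: ler_coop_step.
have [c c0 le_c] := IH _ stepf0.
exists (c * t); first exact: mulr_gt0.
rewrite coop_expectSn; apply: le_trans le_c; rewrite -mulrA ler_wpM2l ?(ltW c0) //.
by rewrite expnS -mulnA.
Qed.

Lemma coop_tau_inf_gt0_of_mean N T : (0 < N)%N -> (0 < T)%N ->
  1 < coop_expect p q T (fun s => (Zof s %/ N)%N%:R) (N, N) ->
  0 < coop_tau_inf p q (1%N, 1%N).
Proof.
move=> N0 T0 /(coop_expect_contraction p01 q01) [rho /andP[rho0 rho1] contr].
have rho01 : 0 <= rho <= 1 by rewrite rho0 ltW.
have surv_ge := coop_surv_ge_onem_expZ p01 q01 rho01 N0 T0 contr.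
have onem_ge0 s : 0 <= 1 - expZ rho N s by rewrite subr_ge0 /expZ exprn_ile1 // ltW.
have [c c0 reach] := coop_expect_diag_ge N 1 onem_ge0.
apply: lt_le_trans (_ : 0 < c * (1 - rho)) _; first by rewrite mulr_gt0 // subr_gt0.
apply: coop_tau_inf_ge => // n.
apply: le_trans (coop_surv_nonincr p01 q01 _ (leq_addl N n)).
rewrite coop_surv_addn //; apply: le_trans (ler_coop_expect p01 q01 _ (surv_ge n) _).
apply: le_trans reach; rewrite ler_pM2l // lerD2l lerN2 /expZ /Zof /= minnn muln1.
rewrite -[X in _ <= X]expr1; apply: ler_wiXn2l => //.
  exact: ltW.
by rewrite divn_gt0 // ltnW // ltn_expl.
Qed.

Lemma coop_expect_alive_below_small n e s : 0 < e ->
  exists2 T, (0 < T)%N & coop_expect p q T (alive_below n) s < e.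
Proof.
move=> e0; set d := (1 - p) ^+ (2 * n).
have d0 : 0 < d by rewrite exprn_gt0 // subr_gt0; case/andP: hp.
have lt_l : coop_tau_inf p q s < coop_tau_inf p q s + d * e by rewrite ltrDl mulr_gt0.
have [T0 _ ltT] := cvgr_lt _ (coop_surv_cvg p01 q01 (s := s)) _ lt_l.
exists T0.+1 => //; rewrite -(ltr_pM2l d0).
have := coop_expect_alive_below p01 q01 n T0.+1 s.
have := coop_tau_inf_le_surv p01 q01 T0.+2 s.
have : coop_surv p q T0.+1 s < coop_tau_inf p q s + d * e := ltT T0.+1 (leqnSn _).
rewrite -/d; lra.
Qed.

Lemma coop_expect_expZ1_lt s : 0 < coop_tau_inf p q s ->
  exists rho T, [/\ 0 < rho < 1, (0 < T)%N & coop_expect p q T (expZ rho 1) s < rho ^+ 3].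
Proof.
set sig := coop_tau_inf p q s => sig0.
have sig1 : sig <= 1.
  by apply: le_trans (coop_tau_inf_le_surv p01 q01 0 s) _; case/andP: (coop_surv01 p01 q01 0 s).
set rho := 1 - sig / 8.
have rho01 : 0 <= rho < 1 by rewrite /rho; apply/andP; split; lra.
have [sig4 sig8] : 0 < sig / 4 /\ 0 < sig / 8 by split; lra.
have [n _ rn] := exists_expr_lt rho01 sig4.
have [T T0 small] := coop_expect_alive_below_small n s sig8.
exists rho, T; split => //; first by rewrite /rho; apply/andP; split; lra.
apply: le_lt_trans (_ : _ <= coop_expect p q T
    (fun s => 1 + rho ^+ n - alive s + alive_below n s) s) _.
  apply: ler_coop_expect => // s'; apply: expZ1_le_alive_below.
  by case/andP: rho01 => -> /ltW.
rewrite coop_expectD coop_expectB coop_expect_cst -coop_survE //.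
have := coop_tau_inf_le_surv p01 q01 T s.
have : 1 - 3 * (sig / 8) <= rho ^+ 3 by rewrite !exprS expr0 mulr1 /rho; nra.
rewrite -/sig; lra.
Qed.

Lemma coop_mean_gt1_of_tau_inf_gt0 : 0 < coop_tau_inf p q (1%N, 1%N) ->
  exists N T : nat, (1 <= N)%N /\ (1 <= T)%N /\
    1 < coop_expect p q T (fun s => (Zof s %/ N)%N%:R) (N, N).
Proof.
move=> /coop_expect_expZ1_lt [rho [T [rho01 T0 lt3]]].
have [N N0 gt1] := coop_mean_gt1_of_expZ1_lt p01 q01 rho01 lt3.
by exists N, T.
Qed.

End Criterion.

Theorem lemma3 (R : realType) (p q : R)
  (hp : 0 < p < 1) (hq : 0 < q < 1) :
  0 < coop_tau_inf p q (1%N, 1%N) <->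
  exists N T : nat, (1 <= N)%N /\ (1 <= T)%N /\
    1 < coop_expect p q T (fun s => (Zof s %/ N)%N%:R) (N, N).
Proof.
split; first exact: coop_mean_gt1_of_tau_inf_gt0.
by case=> N [T [N1 [T1 gt1]]]; apply: coop_tau_inf_gt0_of_mean gt1.
Qed.
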